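(* Let $\mathcal{D}$ be a derivation in one of the proof systems $\mathbf{Reg}$, $\mathbf{Reg}^{+}$ or $\mathbf{Reg}^{+}_{0}$, possibly with open marked assumptions. Then for every instance $\iota$ of the rule (FIX) in $\mathcal{D}$ the following holds: every thread in $\mathcal{D}$ from the conclusion of $\iota$ upwards to a marked assumption that is discharged at $\iota$ passes at least one instance of the rule $(\lambda)$ or of the rule $(@)$.
   Context: Infinite $\lambda$-terms are possibly infinite terms built from variables, abstractions $\lambda y.M$ and applications $M\,N$, considered modulo $\alpha$-equivalence. A prefixed term is an expression $\lambda x_1\ldots x_n.M$ ($n\ge 0$, distinct variables, written as a separate abstraction prefix; $\lambda.M$ for the empty prefix) where $M$ is an infinite $\lambda$-term whose free variables are among $x_1,\dots,x_n$. Derivations are finite natural-deduction style proof trees whose formulas are prefixed terms; a thread is a path in the tree. The system $\mathbf{Reg}^{+}$ has: axiom (nlvar) $\lambda\vec{x}y.y$; rule $(\lambda)$: from $\lambda\vec{x}y.M_0$ infer $\lambda\vec{x}.\lambda y.M_0$; rule $(@)$: from $\lambda\vec{x}.M_0$ and $\lambda\vec{x}.M_1$ infer $\lambda\vec{x}.(M_0\,M_1)$; rule $(\mathrm{del}^{+})$: from $\lambda x_1\ldots x_{n-1}.M$ infer $\lambda x_1\ldots x_n.M$, provided $x_n$ does not occur free in $M$; rule (FIX,$u$): if $\mathcal{D}_0$ is a derivation of $\lambda\vec{x}.M$ that may contain open assumption leaves $[\lambda\vec{x}.M]^u$ marked with $u$, infer $\lambda\vec{x}.M$, discharging these assumptions,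 provided $\mathcal{D}_0$ has depth $\ge 1$ (contains at least one rule instance). The system $\mathbf{Reg}^{+}_0$ has the same axioms and rules, but every instance of (FIX,$u$) must additionally satisfy: every prefixed term $\lambda\vec{y}.N$ occurring on a thread in $\mathcal{D}_0$ from an open marked assumption $(\lambda\vec{x}.M)^u$ downwards has $|\vec{y}|\ge|\vec{x}|$. The system $\mathbf{Reg}$ differs from $\mathbf{Reg}^{+}$ in that the axiom is restricted to $\lambda y.y$ (one-variable prefix) and the rule $(\mathrm{del}^{+})$ is replaced by $(\mathrm{del})$: from $\lambda x_1\ldots x_{i-1}x_{i+1}\ldots x_n.M$ infer $\lambda x_1\ldots x_n.M$, provided $x_i$ does not occur free in $M$. *)

(* Infinite lambda-terms modulo alpha-equivalence are represented
   as coinductive locally-nameless/de Bruijn terms, compared by bisimilarity. *)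
From Stdlib Require Import List Arith.
Import ListNotations.

CoInductive iterm : Type :=
| IVar (k : nat)
| ILam (t : iterm)
| IApp (t u : iterm).

CoInductive bisim : iterm -> iterm -> Prop :=
| bisim_var k : bisim (IVar k) (IVar k)
| bisim_lam t t' : bisim t t' -> bisim (ILam t) (ILam t')
| bisim_app t u t' u' : bisim t t' -> bisim u u' -> bisim (IApp t u) (IApp t' u').

Inductive free : nat -> iterm -> Prop :=
| free_var k : free k (IVar k)
| free_lam k t : free (S k) t -> free k (ILam t)
| free_appl k t u : free k t -> free k (IApp t u)
| free_appr k t u : free k u -> free k (IApp t u).

CoFixpoint shift (c : nat) (t : iterm) : iterm :=
  match t with
  | IVar k => if Nat.ltb k c then IVar k else IVar (S k)
  | ILam t' => ILam (shift (S c) t')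
  | IApp t1 t2 => IApp (shift c t1) (shift c t2)
  end.

(* A prefixed term  lambda x_1 ... x_n . M  is a pair (n, M); inside M the
   prefix variable x_i is the de Bruijn index (n - i), so x_n is index 0. *)
Definition pterm : Type := (nat * iterm)%type.
Definition plen (A : pterm) : nat := fst A.
Definition pbody (A : pterm) : iterm := snd A.

Definition wf_pterm (A : pterm) : Prop := forall k, free k (pbody A) -> k < plen A.

Definition peq (A B : pterm) : Prop := plen A = plen B /\ bisim (pbody A) (pbody B).

Inductive deriv : Type :=
| DAx  (A : pterm)
| DHyp (u : nat) (A : pterm)
| DLam (A : pterm) (d : deriv)
| DApp (A : pterm) (d0 d1 : deriv)
| DDel (A : pterm) (d : deriv)
| DFix (u : nat) (A : pterm) (d : deriv) .

Definition concl (d : deriv) : pterm :=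
  match d with
  | DAx A | DHyp _ A | DLam A _ | DApp A _ _ | DDel A _ | DFix _ A _ => A
  end.

Definition children (d : deriv) : list deriv :=
  match d with
  | DAx _ | DHyp _ _ => []
  | DLam _ d | DDel _ d | DFix _ _ d => [d]
  | DApp _ d0 d1 => [d0; d1]
  end.

Fixpoint sub (d : deriv) (p : list nat) : option deriv :=
  match p with
  | [] => Some d
  | i :: p' => match nth_error (children d) i with
               | Some c => sub c p'
               | None => None
               end
  end.

Definition is_fix_u (u : nat) (o : option deriv) : Prop :=
  match o with Some (DFix v _ _) => v = u | _ => False end.

Definition is_lam_or_app (o : option deriv) : Prop :=
  match o with Some (DLam _ _) | Some (DApp _ _ _) => True | _ => False end.

(* These are exactly the assumptions that
   a (FIX,u) instance with premise derivation d discharges. *)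
Definition open_hyp (u : nat) (d : deriv) (q : list nat) : Prop :=
  (exists B, sub d q = Some (DHyp u B)) /\
  (forall k, k < length q -> ~ is_fix_u u (sub d (firstn k q))).

Inductive system : Type := Reg | RegPlus | RegPlus0.

Fixpoint valid (sys : system) (d : deriv) : Prop :=
  match d with
  | DAx A =>
      wf_pterm A /\ bisim (pbody A) (IVar 0) /\
      match sys with
      | Reg => plen A = 1                      (* lambda y. y *)
      | _ => 1 <= plen A                       (* lambda x1..xn y. y *)
      end
  | DHyp _ A => wf_pterm A
  | DLam A d0 =>
      valid sys d0 /\ wf_pterm A /\
      plen (concl d0) = S (plen A) /\ bisim (pbody A) (ILam (pbody (concl d0)))
  | DApp A d0 d1 =>
      valid sys d0 /\ valid sys d1 /\ wf_pterm A /\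
      plen (concl d0) = plen A /\ plen (concl d1) = plen A /\
      bisim (pbody A) (IApp (pbody (concl d0)) (pbody (concl d1)))
  | DDel A d0 =>
      valid sys d0 /\ wf_pterm A /\
      S (plen (concl d0)) = plen A /\
      match sys with
      | Reg =>
          (* delete x_i (1 <= i <= n), i.e. de Bruijn index c = n - i < n *)
          exists c, c < plen A /\ ~ free c (pbody A) /\
                    bisim (pbody A) (shift c (pbody (concl d0)))
      | _ =>
          (* delete the last variable x_n, de Bruijn index 0 *)
          ~ free 0 (pbody A) /\ bisim (pbody A) (shift 0 (pbody (concl d0)))
      end
  | DFix u A d0 =>
      valid sys d0 /\ wf_pterm A /\
      (* depth of the premise derivation >= 1 *)
      (match d0 with DAx _ | DHyp _ _ => False | _ => True end) /\
      peq (concl d0) A /\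
      (forall q B, open_hyp u d0 q -> sub d0 q = Some (DHyp u B) -> peq B A) /\
      match sys with
      | RegPlus0 =>
          forall q, open_hyp u d0 q ->
            forall k e, k <= length q -> sub d0 (firstn k q) = Some e ->
                        plen A <= plen (concl e)
      | _ => True
      end
  end.

From Stdlib Require Import List Arith Lia.
Import ListNotations.

(* Going upwards, (del) shortens the prefix by one and (FIX) keeps it, while
   (λ) and (@) are the only other inner rules. So on a thread avoiding (λ) and
   (@) the prefix length strictly decreases unless every rule on it is (FIX);
   but a (FIX) directly above an assumption violates the depth condition. The
   assumptions discharged by (FIX,u) have the prefix length of its conclusion,
   hence the thread up to them must pass a (λ) or an (@). *)

Lemma valid_children sys d c : valid sys d -> In c (children d) -> valid sys c.
Proof.
  destruct d; simpl; intros Hd Hc; try contradiction;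
    repeat (destruct Hc as [<- | Hc]; [tauto |]); contradiction.
Qed.

Lemma valid_sub sys p : forall d e, valid sys d -> sub d p = Some e -> valid sys e.
Proof.
  induction p as [| i p IH]; simpl; intros d e Hd Hs.
  - congruence.
  - destruct (nth_error (children d) i) as [c |] eqn:Hc; [| discriminate].
    apply (IH c); [| exact Hs].
    eapply valid_children; [exact Hd |].
    eapply nth_error_In; exact Hc.
Qed.

Lemma thread_lam_app_or_plen_lt sys u B : forall q d,
  q <> [] -> valid sys d -> sub d q = Some (DHyp u B) ->
  (exists k, k < length q /\ is_lam_or_app (sub d (firstn k q))) \/
  plen B < plen (concl d).
Proof.
  induction q as [| i q IH]; intros d Hq Hd Hs; [congruence |].
  assert (Hroot : is_lam_or_app (Some d) ->
    exists k, k < length (i :: q) /\ is_lam_or_app (sub d (firstn k (i :: q)))).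
  { intro H; exists 0; simpl; split; [lia | exact H]. }
  assert (Hlift : forall c, (exists k, k < length q /\ is_lam_or_app (sub c (firstn k q))) ->
    nth_error (children d) i = Some c ->
    exists k, k < length (i :: q) /\ is_lam_or_app (sub d (firstn k (i :: q)))).
  { intros c [k [Hk Hla]] Hc; exists (S k); simpl; rewrite Hc; split; [lia | exact Hla]. }
  destruct d as [A | v A | A c | A c0 c1 | A c | v A c]; simpl in Hs.
  - destruct i; discriminate.
  - destruct i; discriminate.
  - left; apply Hroot; exact I.
  - left; apply Hroot; exact I.
  - destruct i as [| []]; simpl in Hs; try discriminate.
    destruct Hd as [Hc [_ [Hlen _]]]; simpl in *.
    destruct q as [| j q].
    + injection Hs as ->; right; unfold plen in *; simpl in *; lia.
    + destruct (IH c ltac:(discriminate) Hc Hs) as [Hthread | Hlt].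
      * left; apply (Hlift c Hthread); reflexivity.
      * right; lia.
  - destruct i as [| []]; simpl in Hs; try discriminate.
    destruct Hd as [Hc [_ [Hdepth [[Hlen _] _]]]]; simpl in *.
    destruct q as [| j q].
    + injection Hs as ->; contradiction.
    + destruct (IH c ltac:(discriminate) Hc Hs) as [Hthread | Hlt].
      * left; apply (Hlift c Hthread); reflexivity.
      * right; congruence.
Qed.

Theorem mainTheorem1 :
  forall (sys : system) (D : deriv), valid sys D ->
  forall (p : list nat) (u : nat) (A : pterm) (d0 : deriv),
    sub D p = Some (DFix u A d0) ->
    forall q : list nat, open_hyp u d0 q ->
    exists k, k <= length q /\ is_lam_or_app (sub d0 (firstn k q)).
Proof.
  intros sys D HD p u A d0 Hs q Hopen.
  destruct (valid_sub sys p D _ HD Hs) as [Hd0 [_ [Hdepth [[Hlen _] [Hdischarged _]]]]].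
  destruct Hopen as [[B HB] Hbelow].
  destruct (Hdischarged q B (conj (ex_intro _ B HB) Hbelow) HB) as [HBA _].
  destruct q as [| j q].
  - simpl in HB; injection HB as ->; contradiction.
  - destruct (thread_lam_app_or_plen_lt sys u B (j :: q) d0 ltac:(discriminate) Hd0 HB)
      as [[k [Hk Hla]] | Hlt].
    + exists k; split; [lia | exact Hla].
    + unfold plen in *; lia.
Qed.
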